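(* Let $\gamma_*\in(0,1)$, $\zeta_*\in(0,\tfrac12)$, and $\varepsilon\in(0,\tfrac23\zeta_* )$. Set $\zeta=\zeta_*-\varepsilon$ and $\gamma=\gamma_*\frac{\zeta_*}{\zeta}$. Let $P_0$ be the Gaussian mixture $(1-\zeta_* )\mathcal{N}(0,1)+\zeta_*\mathcal{N}(\gamma_*,1)$ and $P_1$ the Gaussian mixture $(1-\zeta)\mathcal{N}(0,1)+\zeta\mathcal{N}(\gamma,1)$. Then there is an absolute constant $C>0$ such that \[ \mathrm{KL}(P_1,P_0)\le C\,\varepsilon^2\gamma_*^4. \]
   Context: $\mathrm{KL}(P_1,P_0)=\int \log\frac{dP_1}{dP_0}\,dP_1$ denotes the Kullback–Leibler divergence. *)

From HB Require Import structures.
From mathcomp Require Import all_boot all_order all_algebra.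
From mathcomp Require Import all_classical all_reals all_analysis.
Set Implicit Arguments. Unset Strict Implicit. Unset Printing Implicit Defensive.
Import Order.TTheory GRing.Theory Num.Theory.
Local Open Scope ring_scope.
Local Open Scope ereal_scope.

(* Density (w.r.t. Lebesgue measure on R) of the two-component Gaussian
   mixture (1 - z) N(0,1) + z N(g,1); normal_pdf m s is the N(m, s^2) density. *)
Definition mix_pdf {R : realType} (z g : R) (x : R) : R :=
  ((1 - z) * normal_pdf 0 1 x + z * normal_pdf g 1 x)%R.

(* KL(P1, P0) = \int log (dP1/dP0) dP1, for P1, P0 with (everywhere positive)
   Lebesgue densities p1, p0:  dP1/dP0 = p1/p0 and dP1 = p1 dx. *)
Definition KL_dens {R : realType} (p1 p0 : R -> R) : \bar R :=
  \int[@lebesgue_measure R]_(x in setT) ((p1 x * ln (p1 x / p0 x))%R)%:E.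

(* With phi the N(0,1) density and w_t = t x - t^2/2, both mixtures are
   phi (1 - z + z e^(w_g)), so p1 - p0 = phi D with
   D = z (e^(w_g) - 1) - zs (e^(w_gs) - 1).  Since z g = zs gs the parts of
   e^w that are linear in x cancel in D, and the second-order remainders give
   |D| <= 8 eps gs^2 (|x| + 2)^2 e^(3|x| + 6) with eps = zs - z.  Pointwise,
   0 <= p1 ln (p1/p0) - (p1 - p0) <= (p1 - p0)^2 / p0 <= 2 phi D^2 because
   p0 >= phi / 2, and the Gaussian factor of phi absorbs the exponential growth
   of D^2 up to an N(0,4) density.  Integrating, the mass terms cancel. *)

From mathcomp Require Import all_boot all_order all_algebra.
From mathcomp Require Import all_classical all_reals all_analysis.
From mathcomp Require Import ring lra.
Import Order.TTheory GRing.Theory Num.Theory.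
Local Open Scope ring_scope.

Section KLGaussianMixture.
Variable R : realType.
Implicit Types u v M p q x y z zs g gs : R.

Definition expR_rem u := expR u - 1 - u.

Lemma expR_rem0 : expR_rem 0 = 0.
Proof. by rewrite /expR_rem expR0 subrr subr0. Qed.

Lemma expR_sub_le u v : expR u - expR v <= expR u * (u - v).
Proof.
have := expR_ge1Dx (v - u); have := expR_gt0 u.
have -> : expR v = expR (v - u) * expR u by rewrite -expRD subrK.
nra.
Qed.

Lemma norm_expR_sub1_le u M : `|u| <= M -> `|expR u - 1| <= M * expR M.
Proof.
move=> uM; have M0 : 0 <= M := le_trans (normr_ge0 u) uM.
have [u0|u0] := leP u 0.
  have := expR_ge1Dx u; have : 1 <= expR M by rewrite -expR0 ler_expR.
  have : - u <= M by rewrite (le_trans _ uM) // -normrN ler_norm.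
  rewrite ler0_norm ?subr_le0 ?expR_le1 //; nra.
have uM' : u <= M by rewrite (le_trans (ler_norm u)).
have eu1 : 1 <= expR u by rewrite -expR0 ler_expR ltW.
have := expR_sub_le u 0; have : expR u <= expR M by rewrite ler_expR.
rewrite expR0 subr0 ger0_norm ?subr_ge0 //; nra.
Qed.

Lemma expR_rem_lipschitz u v M : `|u| <= M -> `|v| <= M ->
  `|expR_rem u - expR_rem v| <= `|u - v| * (M * expR M).
Proof.
wlog vu : u v / v <= u.
  move=> H uM vM; have [vu|/ltW uv] := leP v u; first exact: H.
  by rewrite distrC [`|u - v|]distrC; apply: H.
move=> uM vM.
have := norm_expR_sub1_le _ _ uM; have := norm_expR_sub1_le _ _ vM.
have := expR_sub_le u v; have := expR_sub_le v u.
rewrite [`|u - v|]ger0_norm ?subr_ge0 // /expR_rem !ler_norml.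
move=> h1 h2 /andP[v1 v2] /andP[u1 u2]; apply/andP; split; nra.
Qed.

Lemma ln_le_subr1 q : 0 < q -> ln q <= q - 1.
Proof.
by move=> q0; have := @le_ln1Dx R (q - 1); rewrite [1 + _]addrC subrK; apply; lra.
Qed.

Lemma rel_entropy_integrand_ge0 p q : 0 < p -> 0 < q ->
  0 <= p * ln (p / q) - (p - q).
Proof.
move=> p0 q0; have := ln_le_subr1 _ (divr_gt0 q0 p0).
rewrite !ln_div // => h.
have -> : p - q = p * (1 - q / p) by field; rewrite gt_eqF.
by rewrite subr_ge0 ler_pM2l //; lra.
Qed.

Lemma rel_entropy_integrand_le_chi2 p q : 0 < p -> 0 < q ->
  p * ln (p / q) - (p - q) <= (p - q) ^+ 2 / q.
Proof.
move=> p0 q0; have := ln_le_subr1 _ (divr_gt0 p0 q0).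
have -> : (p - q) ^+ 2 / q = p * (p / q - 1) - (p - q) by field; rewrite gt_eqF.
by rewrite lerD2r ler_pM2l.
Qed.

Lemma normal_pdf01E x : normal_pdf 0 1 x = normal_peak 1 * expR (- x ^+ 2 / 2).
Proof. by rewrite normal_pdfE ?oner_eq0 // /normal_fun subr0 expr1n. Qed.

Lemma normal_pdf02E x : normal_pdf 0 2 x = normal_peak 2 * expR (- x ^+ 2 / 8).
Proof.
rewrite normal_pdfE ?pnatr_eq0 // /normal_fun subr0; congr (_ * expR (_ / _)).
by rewrite mulr2n; lra.
Qed.

Lemma normal_pdf01_gt0 x : 0 < normal_pdf 0 1 x.
Proof. by rewrite normal_pdf01E mulr_gt0 ?expR_gt0 ?normal_peak_gt0 ?oner_eq0. Qed.

Lemma normal_pdf_shift g x :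
  normal_pdf g 1 x = normal_pdf 0 1 x * expR (g * x - g ^+ 2 / 2).
Proof.
rewrite normal_pdf01E normal_pdfE ?oner_eq0 // /normal_fun expr1n -mulrA -expRD.
by congr (_ * expR _); rewrite mulr2n; field.
Qed.

Lemma mix_pdfE z g x :
  mix_pdf z g x = normal_pdf 0 1 x * (1 - z + z * expR (g * x - g ^+ 2 / 2)).
Proof. by rewrite /mix_pdf (normal_pdf_shift g); ring. Qed.

Lemma mix_pdf_ge z g x : 0 <= z -> (1 - z) * normal_pdf 0 1 x <= mix_pdf z g x.
Proof. by move=> z0; rewrite /mix_pdf lerDl mulr_ge0 ?normal_pdf_ge0. Qed.

Lemma mix_pdf_gt0 z g x : 0 <= z -> z < 1 -> 0 < mix_pdf z g x.
Proof.
move=> z0 z1; apply: (lt_le_trans _ (mix_pdf_ge z g x z0)).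
by rewrite mulr_gt0 ?normal_pdf01_gt0 ?subr_gt0.
Qed.

Lemma measurable_mix_pdf z g : measurable_fun setT (mix_pdf z g).
Proof.
apply: measurable_realfun.measurable_funD;
  apply: measurable_realfun.measurable_funM => //; exact: measurable_normal_pdf.
Qed.

Let EFin_mix_pdf z g :
  (fun x => (mix_pdf z g x)%:E) =
  ((fun x => (1 - z)%:E * (normal_pdf 0 1 x)%:E) \+
   (fun x => z%:E * (normal_pdf g 1 x)%:E))%E.
Proof. by apply/funext => x; rewrite /mix_pdf /= EFinD !EFinM. Qed.

Lemma integrable_mix_pdf z g :
  (@lebesgue_measure R).-integrable setT (fun x => (mix_pdf z g x)%:E).
Proof.
rewrite EFin_mix_pdf; apply: integrableD => //;
  exact/integrableZl/integrable_normal_pdf.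
Qed.

Lemma integral_mix_pdf z g :
  (\int[@lebesgue_measure R]_(x in setT) (mix_pdf z g x)%:E = 1)%E.
Proof.
rewrite EFin_mix_pdf integralD //=;
  try exact/integrableZl/integrable_normal_pdf.
by rewrite !integralZl ?integral_normal_pdf ?mule1 -?EFinD ?subrK //;
  exact: integrable_normal_pdf.
Qed.

Lemma gauss_exponent_norm_le g x : 0 <= g -> g <= 4 ->
  `|g * x - g ^+ 2 / 2| <= g * (`|x| + 2).
Proof.
move=> g0 g4; have /andP[x1 x2] : - `|x| <= x <= `|x| by rewrite -ler_norml.
by rewrite ler_norml; apply/andP; split; nra.
Qed.

(* The terms linear in [x] cancel because [z * g = zs * gs]. *)
Lemma mix_ratio_diffE z zs g gs x : z != 0 -> gs != 0 -> z * g = zs * gs ->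
  let wg := g * x - g ^+ 2 / 2 in let ws := gs * x - gs ^+ 2 / 2 in
  z * (expR wg - 1) - zs * (expR ws - 1) =
  - (g * (zs - z) * gs) / 2 + z * (expR_rem wg - expR_rem ws)
    - (zs - z) * expR_rem ws.
Proof.
move=> z0 gs0 zg wg ws; rewrite /expR_rem /wg /ws.
have -> : g = zs * gs / z by rewrite -zg mulrC mulKf.
by field.
Qed.

Lemma mix_ratio_diff_le z zs g gs x :
  0 < z -> z < zs -> zs < 3 * z -> 0 < gs -> gs <= 1 -> z * g = zs * gs ->
  `|z * (expR (g * x - g ^+ 2 / 2) - 1) - zs * (expR (gs * x - gs ^+ 2 / 2) - 1)|
   <= 8 * (zs - z) * gs ^+ 2 * (`|x| + 2) ^+ 2 * expR (3 * `|x| + 6).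
Proof.
move=> z0 zzs zs3 gs0 gs1 zg.
rewrite mix_ratio_diffE ?gt_eqF //.
set eps := zs - z; set y : R := `|x|; set E := expR (3 * y + 6).
have eps0 : 0 < eps by rewrite subr_gt0.
have y0 : 0 <= y := normr_ge0 x.
have ggs : z * (g - gs) = eps * gs by rewrite mulrBr zg /eps; ring.
have gs_g : gs < g.
  by rewrite -subr_gt0 -(pmulr_rgt0 _ z0) ggs mulr_gt0.
have g3 : g <= 3 * gs by rewrite -(ler_pM2l z0) zg; nra.
set wg := g * x - g ^+ 2 / 2; set ws := gs * x - gs ^+ 2 / 2.
set M := 3 * gs * (y + 2).
have hws : `|ws| <= gs * (y + 2) by apply: gauss_exponent_norm_le; lra.
have hwg : `|wg| <= M.
  have : `|wg| <= g * (y + 2) by apply: gauss_exponent_norm_le; lra.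
  by move/le_trans; apply; rewrite /M; nra.
have hwgs : `|wg - ws| <= (g - gs) * (y + 2).
  have -> : wg - ws = (g - gs) * (x - (g + gs) / 2) by rewrite /wg /ws; field.
  rewrite normrM gtr0_norm ?subr_gt0 // ler_pM2l ?subr_gt0 //.
  have /andP[x1 x2] : - y <= x <= y by rewrite -ler_norml.
  by rewrite ler_norml; apply/andP; split; nra.
have hwsM : `|ws| <= M by apply: le_trans hws _; rewrite /M; nra.
have KE : M * expR M <= M * E by rewrite ler_wpM2l ?ler_expR /M; nra.
have E1 : 1 <= E by rewrite -expR0 ler_expR; lra.
set K := M * expR M in KE.
have K0 : 0 <= K by rewrite mulr_ge0 ?expR_ge0 // /M; nra.
have t1 : `|z * (expR_rem wg - expR_rem ws)| <= eps * gs * (y + 2) * K.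
  rewrite normrM gtr0_norm // -ggs -!mulrA ler_pM2l // mulrA.
  apply: le_trans (expR_rem_lipschitz _ _ _ hwg hwsM) _.
  by rewrite ler_wpM2r.
have t2 : `|eps * expR_rem ws| <= eps * gs * (y + 2) * K.
  have M0 : `|0 : R| <= M by rewrite normr0 /M; nra.
  have := expR_rem_lipschitz _ _ _ hwsM M0; rewrite expR_rem0 !subr0 => r2.
  rewrite normrM gtr0_norm // -!mulrA ler_pM2l // mulrA.
  by apply: le_trans r2 _; rewrite ler_wpM2r.
have t0 : `|- (g * eps * gs) / 2| <= 3 / 2 * eps * gs ^+ 2.
  have : 0 <= (3 * gs - g) * eps * gs by rewrite !mulr_ge0 ?subr_ge0 // ltW.
  rewrite mulNr normrN ger0_norm; first nra.
  by rewrite divr_ge0 // !mulr_ge0 // ltW // (lt_trans gs0).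
have KME : eps * gs * (y + 2) * K <= 3 * (eps * gs ^+ 2 * ((y + 2) ^+ 2 * E)).
  have -> : 3 * (eps * gs ^+ 2 * ((y + 2) ^+ 2 * E)) =
    eps * gs * (y + 2) * (M * E) by rewrite /M; ring.
  by rewrite ler_wpM2l // !mulr_ge0 ?ltW //; lra.
have QE : eps * gs ^+ 2 <= eps * gs ^+ 2 * ((y + 2) ^+ 2 * E).
  by rewrite ler_peMr ?mulr_ge0 ?exprn_ge0 ?ltW //; nra.
apply: le_trans (ler_normB _ _) _; apply: le_trans (lerD (ler_normD _ _) t2) _.
have -> : 8 * eps * gs ^+ 2 * (y + 2) ^+ 2 * E =
  8 * (eps * gs ^+ 2 * ((y + 2) ^+ 2 * E)) by ring.
nra.
Qed.

Lemma gauss_tail_le y : 0 <= y ->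
  (y + 2) ^+ 4 * expR (3 * y + 6) ^+ 2 * expR (- y ^+ 2 / 2)
  <= expR 85 * expR (- y ^+ 2 / 8).
Proof.
(* [y + 2 <= e^(y+1)], and [10 y + 16 - 3 y^2 / 8 <= 85] has negative discriminant. *)
move=> y0; have y2 : y + 2 <= expR (y + 1) by have := expR_ge1Dx (y + 1); lra.
apply: le_trans (_ : _ <= expR (y + 1) ^+ 4 * expR (3 * y + 6) ^+ 2 *
                        expR (- y ^+ 2 / 2)) _.
  by rewrite !ler_wpM2r ?expR_ge0 ?exprn_ge0 ?lerXn2r ?nnegrE ?expR_ge0 //; lra.
rewrite -!expRM_natl -!expRD ler_expR.
have : 0 <= (y - 40 / 3) ^+ 2 := sqr_ge0 _.
nra.
Qed.

Lemma normal_pdf01_weight_le x :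
  normal_pdf 0 1 x * ((`|x| + 2) ^+ 2 * expR (3 * `|x| + 6)) ^+ 2
  <= expR 85 * normal_peak 1 / normal_peak 2 * normal_pdf 0 2 x.
Proof.
have c1 : 0 < normal_peak (1 : R) by rewrite normal_peak_gt0 ?oner_eq0.
have c2 : 0 < normal_peak (2 : R) by rewrite normal_peak_gt0 ?pnatr_eq0.
have x2 : x ^+ 2 = `|x| ^+ 2 by rewrite real_normK ?num_real.
rewrite normal_pdf01E normal_pdf02E x2.
have -> : expR 85 * normal_peak 1 / normal_peak 2 *
    (normal_peak 2 * expR (- `|x| ^+ 2 / 8)) =
  normal_peak 1 * (expR 85 * expR (- `|x| ^+ 2 / 8)) by field; rewrite gt_eqF.
rewrite -mulrA ler_pM2l // mulrC exprMn -exprM.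
exact: gauss_tail_le.
Qed.

Lemma KL_dens_le_integral (p1 p0 f : R -> R) :
  measurable_fun setT p1 -> measurable_fun setT p0 ->
  (forall x, 0 < p1 x) -> (forall x, 0 < p0 x) ->
  (@lebesgue_measure R).-integrable setT (fun x => (p1 x)%:E) ->
  (@lebesgue_measure R).-integrable setT (fun x => (p0 x)%:E) ->
  (\int[@lebesgue_measure R]_(x in setT) (p1 x)%:E =
   \int[@lebesgue_measure R]_(x in setT) (p0 x)%:E)%E ->
  (@lebesgue_measure R).-integrable setT (fun x => (f x)%:E) ->
  (forall x, p1 x * ln (p1 x / p0 x) - (p1 x - p0 x) <= f x) ->
  (KL_dens p1 p0 <= \int[@lebesgue_measure R]_(x in setT) (f x)%:E)%E.
Proof.
move=> mp1 mp0 p1_gt0 p0_gt0 ip1 ip0 mass intf hf.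
set h := fun x => p1 x * ln (p1 x / p0 x) - (p1 x - p0 x).
have h_ge0 x : 0 <= h x by exact: rel_entropy_integrand_ge0.
have mh : measurable_fun setT h.
  have -> : h = fun x => p1 x * (ln (p1 x) - ln (p0 x)) - (p1 x - p0 x).
    by apply/funext => x; rewrite /h ln_div ?posrE.
  apply: measurable_realfun.measurable_funB;
    last exact: measurable_realfun.measurable_funB.
  apply: measurable_realfun.measurable_funM => //.
  by apply: measurable_realfun.measurable_funB;
    apply: measurableT_comp (@measurable_realfun.measurable_ln R) _.
have ih : (@lebesgue_measure R).-integrable setT (fun x => (h x)%:E).
  apply: le_integrable intf => //; first exact/measurable_realfun.measurable_EFinP.
  move=> x _; have hfx := hf x.
  by rewrite !abse_EFin lee_fin !ger0_norm // (le_trans (h_ge0 x)).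
have -> : KL_dens p1 p0 = (\int[@lebesgue_measure R]_(x in setT)
    ((h x)%:E + ((p1 x)%:E - (p0 x)%:E)))%E.
  by apply: eq_integral => x _; rewrite /h -EFinB -EFinD subrK.
rewrite integralD //; last exact: integrableB.
rewrite integralB // mass subee ?adde0; last exact: integrable_fin_num.
by apply: le_integral => // x _; rewrite lee_fin; exact: hf.
Qed.

Definition kl_mix_const : R := 128 * (expR 85 * normal_peak 1 / normal_peak 2).

Lemma kl_mix_const_gt0 : 0 < kl_mix_const.
Proof.
by rewrite mulr_gt0 // divr_gt0 ?mulr_gt0 ?expR_gt0 ?normal_peak_gt0 ?oner_eq0 ?pnatr_eq0.
Qed.

Lemma rel_entropy_integrand_mix_le z zs g gs x :
  0 < z -> z < zs -> zs < 3 * z -> zs <= 1 / 2 -> 0 < gs -> gs <= 1 ->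
  z * g = zs * gs ->
  mix_pdf z g x * ln (mix_pdf z g x / mix_pdf zs gs x)
    - (mix_pdf z g x - mix_pdf zs gs x)
  <= kl_mix_const * (zs - z) ^+ 2 * gs ^+ 4 * normal_pdf 0 2 x.
Proof.
move=> z0 zzs zs3 zs_half gs0 gs1 zg.
set p1 := mix_pdf z g x; set p0 := mix_pdf zs gs x.
set phi := normal_pdf 0 1 x.
set D := z * (expR (g * x - g ^+ 2 / 2) - 1) - zs * (expR (gs * x - gs ^+ 2 / 2) - 1).
set W := (`|x| + 2) ^+ 2 * expR (3 * `|x| + 6).
set B := 8 * (zs - z) * gs ^+ 2 * W.
have phi0 : 0 < phi := normal_pdf01_gt0 x.
have p10 : 0 < p1 by apply: mix_pdf_gt0; lra.
have p0_half : phi / 2 <= p0.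
  have := mix_pdf_ge zs gs x (ltW (lt_trans z0 zzs)); rewrite -/p0 -/phi; nra.
have p00 : 0 < p0 by lra.
have p1_sub : p1 - p0 = phi * D by rewrite /p1 /p0 !mix_pdfE /D /phi; ring.
have hD : `|D| <= B by rewrite /B /W mulrA; exact: mix_ratio_diff_le.
have D2 : D ^+ 2 <= B ^+ 2.
  by rewrite -real_normK ?num_real // lerXn2r ?nnegrE // (le_trans _ hD).
apply: le_trans (rel_entropy_integrand_le_chi2 _ _ p10 p00) _.
apply: le_trans (_ : _ <= 2 * phi * B ^+ 2) _.
  rewrite ler_pdivrMr // p1_sub exprMn.
  have : 0 <= phi ^+ 2 * (B ^+ 2 - D ^+ 2) by rewrite mulr_ge0 ?sqr_ge0 ?subr_ge0.
  have : 0 <= phi * B ^+ 2 by rewrite mulr_ge0 ?sqr_ge0 // ltW.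
  nra.
have -> : 2 * phi * B ^+ 2 = 128 * ((zs - z) ^+ 2 * gs ^+ 4) * (phi * W ^+ 2).
  by rewrite /B; ring.
have -> : kl_mix_const * (zs - z) ^+ 2 * gs ^+ 4 * normal_pdf 0 2 x =
  128 * ((zs - z) ^+ 2 * gs ^+ 4) *
  (expR 85 * normal_peak 1 / normal_peak 2 * normal_pdf 0 2 x).
  by rewrite /kl_mix_const; ring.
apply: ler_wpM2l; last exact: normal_pdf01_weight_le.
by rewrite !mulr_ge0 ?exprn_ge0 ?subr_ge0 // ltW.
Qed.

End KLGaussianMixture.

Theorem lemma10 (R : realType) :
  exists C : R, 0 < C /\
  forall gs zs eps : R,
    0 < gs -> gs < 1 ->
    0 < zs -> zs < 1 / 2 ->
    0 < eps -> eps < 2 / 3 * zs ->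
    let z := zs - eps in
    let g := gs * (zs / z) in
    (KL_dens (mix_pdf z g) (mix_pdf zs gs)
      <= (C * eps ^+ 2 * gs ^+ 4)%:E)%E.
Proof.
exists (kl_mix_const R); split; first exact: kl_mix_const_gt0.
move=> gs zs eps gs0 gs1 zs0 zs1 e0 e1 /=.
set z := zs - eps; set g := gs * (zs / z).
have z0 : 0 < z by rewrite /z; lra.
have zg : z * g = zs * gs by rewrite /g; field; rewrite gt_eqF.
have eps_z : eps = zs - z by rewrite /z; ring.
set K := kl_mix_const R * eps ^+ 2 * gs ^+ 4.
have EFin_K x : (K * normal_pdf 0 2 x)%:E = (K%:E * (normal_pdf 0 2 x)%:E)%E.
  by rewrite EFinM.
have intK : (@lebesgue_measure R).-integrable setT
    (fun x => (K * normal_pdf 0 2 x)%:E).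
  by under eq_fun do rewrite EFin_K; exact/integrableZl/integrable_normal_pdf.
apply: le_trans (KL_dens_le_integral _ _ _ (fun x => K * normal_pdf 0 2 x)
  _ _ _ _ _ _ _ intK _) _.
- exact: measurable_mix_pdf.
- exact: measurable_mix_pdf.
- by move=> x; apply: mix_pdf_gt0; rewrite /z; lra.
- by move=> x; apply: mix_pdf_gt0; lra.
- exact: integrable_mix_pdf.
- exact: integrable_mix_pdf.
- by rewrite !integral_mix_pdf.
- move=> x; rewrite /K eps_z.
  by apply: rel_entropy_integrand_mix_le => //; rewrite /z; lra.
- under eq_integral do rewrite EFin_K.
  by rewrite integralZl ?integral_normal_pdf ?mule1 //; exact: integrable_normal_pdf.
Qed.
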